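(* Let $p$ be a prime and let $\alpha\in\mathbf{Bad}$ with $\alpha>0$. Suppose there is a sequence of natural numbers $\{\ell_m\}_{m\in\mathbb{N}}$ such that $p^{\ell_m}\alpha$ is not an infinite loop mod $p^m$ for every $m\in\mathbb{N}$. Then $m_p(\alpha)=0$.
   Context: $\mathbf{Bad}=\{\alpha\in\mathbb{R}:\inf_{q\in\mathbb{N}}q\|q\alpha\|>0\}$, $\|x\|$ the distance to the nearest integer; $m_p(\alpha)=\inf_{q\in\mathbb{N}} q\,|q|_p\,\|q\alpha\|$ with $|\cdot|_p$ the $p$-adic absolute value. For $\alpha$ with continued fraction $[a_0;a_1,\ldots]$ and convergent denominators $q_{-1}=0,q_0=1,q_k=a_kq_{k-1}+q_{k-2}$, the semi-convergent denominators are $mq_k+q_{k-1}$ for $0\le m\le a_{k+1}$. A real $\alpha>0$ is an \emph{infinite loop mod $n$} if none of its semi-convergent denominators is divisible by $n$, except $q_{-1}=0$. *)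

From HB Require Import structures.
From mathcomp Require Import all_boot all_order all_algebra.
From mathcomp Require Import all_classical all_reals.
Set Implicit Arguments. Unset Strict Implicit. Unset Printing Implicit Defensive.
Import Order.TTheory GRing.Theory Num.Theory.
Local Open Scope classical_set_scope.
Local Open Scope ring_scope.

Definition dist_int {R : realType} (x : R) : R :=
  Num.min (x - (Num.floor x)%:~R) ((Num.floor x + 1)%:~R - x).

Definition padic_abs {R : realType} (p q : nat) : R := ((p ^ logn p q)%:R)^-1.

Definition Bad {R : realType} (alpha : R) : Prop :=
  0 < inf [set (q%:R * dist_int (q%:R * alpha)) | q in [set q : nat | (0 < q)%N]].

Definition m_p {R : realType} (p : nat) (alpha : R) : R :=
  inf [set (q%:R * padic_abs p q * dist_int (q%:R * alpha))
       | q in [set q : nat | (0 < q)%N]].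

(* Complete quotients x_k via the Gauss map: x_0 = alpha,
   x_{k+1} = 1/(x_k - a_k); partial quotients a_k = floor x_k.
   (If the expansion terminates, 0^-1 = 0 gives a_j = 0 afterwards.) *)
Fixpoint cf_x {R : realType} (alpha : R) (k : nat) : R :=
  match k with
  | 0 => alpha
  | k'.+1 => (cf_x alpha k' - (Num.floor (cf_x alpha k'))%:~R)^-1
  end.

Definition cf_a {R : realType} (alpha : R) (k : nat) : int :=
  Num.floor (cf_x alpha k).

(* cf_qpair alpha k = (q_{k-1}, q_k), with q_{-1} = 0, q_0 = 1,
   q_k = a_k q_{k-1} + q_{k-2}. *)
Fixpoint cf_qpair {R : realType} (alpha : R) (k : nat) : int * int :=
  match k with
  | 0 => (0, 1)
  | k'.+1 => let: (qm, q) := cf_qpair alpha k' in (q, cf_a alpha k'.+1 * q + qm)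
  end.

Definition cf_q {R : realType} (alpha : R) (k : nat) : int := (cf_qpair alpha k).2.
Definition cf_qprev {R : realType} (alpha : R) (k : nat) : int := (cf_qpair alpha k).1.

Definition semiconv_denom {R : realType} (alpha : R) (d : int) : Prop :=
  exists (k m : nat), (m%:Z <= cf_a alpha k.+1) /\
                      d = m%:Z * cf_q alpha k + cf_qprev alpha k.

(* alpha > 0 is an infinite loop mod n if no semi-convergent denominator
   other than q_{-1} = 0 is divisible by n *)
Definition infinite_loop_mod {R : realType} (alpha : R) (n : nat) : Prop :=
  0 < alpha /\
  forall d : int, semiconv_denom alpha d -> d != 0 -> ~~ (n%:Z %| d)%Z.

(* Fix eps > 0 and m with p^m > eps^-2, and put b = p^l alpha with
   l = l_m.  Since b is not an infinite loop mod p^m, some nonzero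
   semi-convergent denominator d = j q_k + q_(k-1) of b (0 <= j <= a_(k+1))
   is divisible by p^m.  Write x = x_(k+1) for the complete quotient.  The
   classical estimates (valid as b is irrational, which follows from
   alpha in Bad) give  q_k ||q_k b|| <= 1/x  and  d ||d b|| <= x.  Since
   the m_p-term of n p^l is  n ||n b|| / p^(v_p(n)),  the multiple q_k p^l
   yields a term <= 1/x and d p^l yields a term <= x / p^m.  If 1/x < eps
   the first is small; otherwise x <= 1/eps and the second is < eps.
   Hence the (nonnegative) terms defining m_p(alpha) get arbitrarily small. *)
From HB Require Import structures.
From mathcomp Require Import all_boot all_order all_algebra.
From mathcomp Require Import all_classical all_reals.
From mathcomp Require Import ring lra zify.
Import Order.TTheory GRing.Theory Num.Theory.
Local Open Scope ring_scope.

Lemma dist_int_ge0 {R : realType} (x : R) : 0 <= dist_int x.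
Proof.
rewrite /dist_int; have /andP[lo hi] := floor_itv x.
by rewrite le_min; apply/andP; split; lra.
Qed.

Lemma dist_int_le {R : realType} (x : R) (n : int) : dist_int x <= `|x - n%:~R|.
Proof.
rewrite /dist_int; have /andP[lo hi] := floor_itv x.
have [n_le | floor_lt] := lerP n (Num.floor x).
  have : n%:~R <= (Num.floor x)%:~R :> R by rewrite ler_int.
  move=> ?; rewrite ger0_norm; last lra.
  by rewrite ge_min; apply/orP; left; lra.
have : (Num.floor x + 1)%:~R <= n%:~R :> R by rewrite ler_int; lia.
move=> ?; rewrite ler0_norm; last lra.
by rewrite ge_min; apply/orP; right; lra.
Qed.

Lemma dist_int_intr {R : realType} (n : int) : dist_int (n%:~R : R) = 0.
Proof.
apply/eqP; rewrite eq_le dist_int_ge0 andbT.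
by have := @dist_int_le R n%:~R n; rewrite subrr normr0.
Qed.

(* The real-arithmetic core of the convergent and semi-convergent estimates:
   dd, N, X, Q, Qp stand for ||q b||, |D_k|, x_(k+1), q_k, q_(k-1), related
   by N (Q X + Qp) = 1. *)
Lemma convergent_arith {F : realFieldType} (dd N X Q Qp : F) :
  0 <= dd <= N -> 1 <= Q -> 0 <= Qp -> 1 <= X -> N * (Q * X + Qp) = 1 ->
  Q * dd <= X^-1.
Proof.
move=> /andP[dd_ge0 dd_le] Q_ge1 Qp_ge0 X_ge1 key.
rewrite -[X^-1]mul1r ler_pdivlMr; last lra.
have : Q * dd * X <= Q * N * X by apply: ler_wpM2r; [lra | apply: ler_wpM2l; lra].
rewrite -key; nra.
Qed.

Lemma semiconvergent_arith {F : realFieldType} (dd N X Q Qp J : F) :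
  0 <= dd <= N * (X - J) -> 0 <= J <= X -> 1 <= Q -> 0 <= Qp -> 0 <= N ->
  N * (Q * X + Qp) = 1 -> (J * Q + Qp) * dd <= X.
Proof.
move=> /andP[dd_ge0 dd_le] /andP[J_ge0 J_le] Q_ge1 Qp_ge0 N_ge0 key.
have dd_le' : dd <= N * X by nra.
have JQ : J * Q + Qp <= Q * X + Qp by nra.
have : (J * Q + Qp) * dd <= (Q * X + Qp) * (N * X).
  by apply: ler_pM => //; nra.
by rewrite mulrA (mulrC _ N) key mul1r.
Qed.

Definition irrational {R : realType} (b : R) : Prop :=
  forall Q P : int, 0 < Q -> Q%:~R * b != P%:~R.

Section ContinuedFraction.
Variables (R : realType) (b : R).

(* Numerators (p_(k-1), p_k) of the convergents, with p_(-1) = 1, p_0 = a_0. *)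
Fixpoint cf_ppair (k : nat) : int * int :=
  match k with
  | 0 => (1, cf_a b 0)
  | k'.+1 => let: (pm, pk) := cf_ppair k' in (pk, cf_a b k'.+1 * pk + pm)
  end.
Definition cf_p (k : nat) : int := (cf_ppair k).2.
Definition cf_pprev (k : nat) : int := (cf_ppair k).1.

Definition cf_err (k : nat) : R := (cf_q b k)%:~R * b - (cf_p k)%:~R.
Definition cf_errprev (k : nat) : R := (cf_qprev b k)%:~R * b - (cf_pprev k)%:~R.

Definition cf_frac (k : nat) : R := cf_x b k - (cf_a b k)%:~R.

Lemma cf_qS k :
  cf_q b k.+1 = cf_a b k.+1 * cf_q b k + cf_qprev b k /\ cf_qprev b k.+1 = cf_q b k.
Proof. by rewrite /cf_q /cf_qprev /=; case: (cf_qpair b k). Qed.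

Lemma cf_pS k :
  cf_p k.+1 = cf_a b k.+1 * cf_p k + cf_pprev k /\ cf_pprev k.+1 = cf_p k.
Proof. by rewrite /cf_p /cf_pprev /=; case: (cf_ppair k). Qed.

Lemma cf_errS k :
  cf_err k.+1 = (cf_a b k.+1)%:~R * cf_err k + cf_errprev k /\
  cf_errprev k.+1 = cf_err k.
Proof.
rewrite /cf_err /cf_errprev; have [-> ->] := cf_qS k; have [-> ->] := cf_pS k.
by split => //; rewrite !rmorphD !rmorphM /=; ring.
Qed.

Lemma cf_det k : `|cf_qprev b k * cf_p k - cf_q b k * cf_pprev k| = 1.
Proof.
elim: k => [|k IH].
  by rewrite /cf_qprev /cf_q /cf_p /cf_pprev /= mul0r sub0r mul1r normrN.
have [-> ->] := cf_qS k; have [-> ->] := cf_pS k.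
by rewrite -IH -normrN; congr `|_|; ring.
Qed.

Lemma cf_det_err k :
  (cf_q b k)%:~R * cf_errprev k - (cf_qprev b k)%:~R * cf_err k
  = ((cf_qprev b k * cf_p k - cf_q b k * cf_pprev k)%:~R : R).
Proof. by rewrite /cf_err /cf_errprev rmorphB !rmorphM /=; ring. Qed.

Lemma cf_frac_ge0 k : 0 <= cf_frac k.
Proof. by rewrite /cf_frac /cf_a; have /andP[? ?] := floor_itv (cf_x b k); lra. Qed.

Lemma cf_frac_lt1 k : cf_frac k < 1.
Proof.
rewrite /cf_frac /cf_a; have /andP[_ hi] := floor_itv (cf_x b k).
by move: hi; rewrite rmorphD /=; lra.
Qed.

Lemma cf_x_ge1 {k : nat} : cf_frac k != 0 -> 1 <= cf_x b k.+1.
Proof.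
move=> frac_neq0; have frac_gt0 : 0 < cf_frac k by rewrite lt_def frac_neq0 cf_frac_ge0.
rewrite [cf_x b k.+1]/= -/(cf_frac k) -[1]invr1 lef_pV2 ?posrE //.
exact: ltW (cf_frac_lt1 k).
Qed.

Lemma cf_errprev_x {k : nat} : cf_frac k != 0 ->
  cf_err k = - cf_errprev k * cf_frac k ->
  cf_errprev k = - cf_err k * cf_x b k.+1.
Proof.
move=> frac_neq0 ->; rewrite [cf_x b k.+1]/= -/(cf_frac k).
by rewrite !mulNr opprK -mulrA mulfV ?mulr1.
Qed.

Section Irrational.
Hypothesis b_irr : irrational b.

(* For irrational b the expansion never terminates: D_k = - D_(k-1) frac_k
   with q_k >= 1 forces frac_k != 0, as D_k = 0 would make q_k b an integer. *)
Lemma cf_frac_neq0_of {k : nat} : cf_err k = - cf_errprev k * cf_frac k ->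
  1 <= cf_q b k -> cf_frac k != 0.
Proof.
move=> err_eq q_ge1; apply/negP => /eqP frac0.
move: err_eq; rewrite frac0 mulr0 /cf_err => /eqP; rewrite subr_eq0.
by apply/negP; apply: b_irr; lia.
Qed.

Lemma cf_invariant k :
  [/\ cf_err k = - cf_errprev k * cf_frac k, 1 <= cf_q b k & 0 <= cf_qprev b k].
Proof.
elim: k => [|k [errk qk qprevk]].
  by split => //; rewrite /cf_err /cf_errprev /cf_frac /cf_q /cf_qprev /cf_p
    /cf_pprev /cf_a /=; ring.
have frac_neq0 := cf_frac_neq0_of errk qk.
have a_ge1 : 1 <= cf_a b k.+1 by rewrite /cf_a floor_ge_int; exact: cf_x_ge1.
have [qe qprev_e] := cf_qS k; have [err_e errprev_e] := cf_errS k.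
split; [|by rewrite qe; nia|by rewrite qprev_e; lia].
rewrite err_e errprev_e (cf_errprev_x frac_neq0 errk) /cf_frac /cf_a.
ring.
Qed.

Lemma cf_frac_neq0 k : cf_frac k != 0.
Proof. by have [err_eq q_ge1 _] := cf_invariant k; exact: cf_frac_neq0_of. Qed.

Lemma cf_err_key k :
  `|cf_err k| * ((cf_q b k)%:~R * cf_x b k.+1 + (cf_qprev b k)%:~R) = 1.
Proof.
have [errk qk qprevk] := cf_invariant k.
have x_ge1 := cf_x_ge1 (cf_frac_neq0 k).
have errprev_e := cf_errprev_x (cf_frac_neq0 k) errk.
have : (1 : R) <= (cf_q b k)%:~R by rewrite ler1z.
have : (0 : R) <= (cf_qprev b k)%:~R by rewrite ler0z.
move=> ? ?; rewrite -[X in _ * X]ger0_norm; last by nra.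
rewrite -normrM.
have -> : cf_err k * ((cf_q b k)%:~R * cf_x b k.+1 + (cf_qprev b k)%:~R)
  = - ((cf_q b k)%:~R * cf_errprev k - (cf_qprev b k)%:~R * cf_err k).
  by rewrite errprev_e; ring.
by rewrite cf_det_err normrN -intr_norm cf_det.
Qed.

Lemma convergent_bound k :
  (cf_q b k)%:~R * dist_int ((cf_q b k)%:~R * b) <= (cf_x b k.+1)^-1.
Proof.
have [_ qk qprevk] := cf_invariant k.
apply: (convergent_arith _ `|cf_err k| _ _ (cf_qprev b k)%:~R).
- by rewrite dist_int_ge0; exact: dist_int_le.
- by rewrite ler1z.
- by rewrite ler0z.
- exact: cf_x_ge1 (cf_frac_neq0 k).
- exact: cf_err_key.
Qed.

(* Semi-convergents: for 0 <= j <= a_(k+1), d = j q_k + q_(k-1) satisfies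
   d >= 0 and d ||d b|| <= x_(k+1), since d b - (j p_k + p_(k-1)) equals
   D_k (j - x_(k+1)). *)
Lemma semiconvergent_bound k (j : nat) : j%:Z <= cf_a b k.+1 ->
  0 <= j%:Z * cf_q b k + cf_qprev b k /\
  ((j%:Z * cf_q b k + cf_qprev b k)%:~R) *
     dist_int (((j%:Z * cf_q b k + cf_qprev b k)%:~R) * b) <= cf_x b k.+1.
Proof.
move=> j_le; have [errk qk qprevk] := cf_invariant k.
split; first by nia.
have j_le_x : (j%:R : R) <= cf_x b k.+1.
  by apply: le_trans (floor_le _); rewrite -[j%:R]/(j%:Z%:~R) ler_int.
have d_e : (j%:Z * cf_q b k + cf_qprev b k)%:~R
           = j%:R * (cf_q b k)%:~R + (cf_qprev b k)%:~R :> R.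
  by rewrite rmorphD rmorphM.
have err_d : (j%:Z * cf_q b k + cf_qprev b k)%:~R * b
             - (j%:Z * cf_p k + cf_pprev k)%:~R
             = cf_err k * (j%:R - cf_x b k.+1) :> R.
  rewrite d_e rmorphD rmorphM.
  transitivity (j%:R * cf_err k + cf_errprev k); first by rewrite /cf_err /cf_errprev; ring.
  by rewrite (cf_errprev_x (cf_frac_neq0 k) errk); ring.
have := dist_int_le ((j%:Z * cf_q b k + cf_qprev b k)%:~R * b)
  (j%:Z * cf_p k + cf_pprev k).
have j_sub_le0 : j%:R - cf_x b k.+1 <= 0 by rewrite subr_le0.
rewrite err_d normrM (ler0_norm j_sub_le0) opprB d_e => dist_le.
apply: semiconvergent_arith (cf_err_key k).
- by rewrite dist_int_ge0.
- by rewrite ler0n j_le_x.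
- by rewrite ler1z.
- by rewrite ler0z.
- exact: normr_ge0.
Qed.

End Irrational.
End ContinuedFraction.

Arguments cf_x_ge1 {R b k}.
Arguments cf_invariant {R b}.
Arguments cf_frac_neq0 {R b}.
Arguments semiconvergent_bound {R b} b_irr {k j}.

(* Every positive integer multiple of a badly approximable number is
   irrational: r alpha = P/Q would make the term (|Q| r) ||(|Q| r) alpha||
   of the infimum defining Bad vanish. *)
Lemma bad_irrational {R : realType} (alpha : R) (r : nat) :
  Bad alpha -> (0 < r)%N -> irrational (r%:R * alpha).
Proof.
move=> alpha_bad r_gt0 Q P Q_gt0; apply/negP => /eqP rQ_int.
move: alpha_bad; rewrite /Bad; apply/negP; rewrite -leNgt.
set n := (`|Q|%N * r)%N.
have term0 : (n%:R : R) * dist_int (n%:R * alpha) = 0.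
  have -> : (n%:R : R) * alpha = P%:~R.
    by rewrite /n natrM natr_absz ger0_norm ?(ltW Q_gt0) // -mulrA.
  by rewrite dist_int_intr mulr0.
rewrite -term0; apply: ge_inf; last by exists n => //=; rewrite muln_gt0 absz_gt0; lia.
by exists 0 => _ [q _ <-]; rewrite mulr_ge0 ?dist_int_ge0.
Qed.

Definition mp_term {R : realType} (p q : nat) (alpha : R) : R :=
  q%:R * padic_abs p q * dist_int (q%:R * alpha).

Lemma mp_term_ge0 {R : realType} (p q : nat) (alpha : R) : 0 <= mp_term p q alpha.
Proof. by rewrite /mp_term !mulr_ge0 ?dist_int_ge0 ?invr_ge0. Qed.

Lemma inf_eq0 {R : realType} (S : set R) : (S !=set0)%classic ->
  (forall x, S x -> 0 <= x) -> (forall e, 0 < e -> exists2 x, S x & x < e) ->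
  inf S = 0.
Proof.
move=> S_neq0 S_ge0 S_small; apply/eqP; rewrite eq_le lb_le_inf // andbT.
rewrite leNgt; apply/negP => /S_small[x Sx x_lt].
have : inf S <= x by apply: ge_inf => //; exists 0.
by rewrite leNgt x_lt.
Qed.

(* Rescaling by p^l: with b = p^l alpha, the m_p-term of n p^l equals
   n ||n b|| / p^(v_p n), hence is at most n ||n b|| / p^e when p^e | n. *)
Lemma mp_term_scaled {R : realType} {p n e : nat} (l : nat) (alpha : R) :
  prime p -> (0 < n)%N -> (p ^ e %| n)%N ->
  mp_term p (n * p ^ l) alpha
  <= n%:R * dist_int (n%:R * ((p ^ l)%:R * alpha)) / (p ^ e)%:R.
Proof.
move=> p_prime n_gt0 pe_dvd; have p_gt0 := prime_gt0 p_prime.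
have pow_neq0 k : ((p ^ k)%:R : R) != 0 by rewrite pnatr_eq0 -lt0n expn_gt0 p_gt0.
have -> : mp_term p (n * p ^ l) alpha
          = n%:R * dist_int (n%:R * ((p ^ l)%:R * alpha)) / (p ^ logn p n)%:R.
  rewrite /mp_term /padic_abs lognM ?expn_gt0 ?p_gt0 // pfactorK // expnD !natrM.
  by rewrite [n%:R * (_ * alpha)]mulrA; field; rewrite !pow_neq0.
have e_le : ((p ^ e)%:R : R) <= (p ^ logn p n)%:R.
  by rewrite ler_nat leq_pexp2l ?prime_gt1 // -pfactor_dvdn.
apply: ler_wpM2l; first by rewrite mulr_ge0 ?dist_int_ge0.
by rewrite lef_pV2 // posrE ltr0n expn_gt0 p_gt0.
Qed.

Lemma exists_pow_gt {R : realType} {p : nat} (r : R) :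
  (1 < p)%N -> exists2 m, (0 < m)%N & r < (p ^ m)%:R.
Proof.
move=> p_gt1; exists (`|Num.ceil r|%N).+1 => //.
apply: le_lt_trans (ceil_ge r) _; apply: le_lt_trans (ler_norm _) _.
rewrite -intr_norm -natr_absz ltr_nat.
exact: ltn_trans (ltnSn _) (ltn_expl _ p_gt1).
Qed.

(* If 1/X >= e then X <= 1/e, so X / P < e as soon as P > 1/e^2. *)
Lemma quotient_lt {F : realFieldType} {e X P : F} :
  0 < e -> 0 < X -> e <= X^-1 -> e^-1 * e^-1 < P -> X / P < e.
Proof.
move=> e_gt0 X_gt0 e_le P_large.
have X_le : X <= e^-1 by rewrite -(invrK X) lef_pV2 ?posrE ?invr_gt0.
have ee : e * e^-1 = 1 by rewrite mulfV ?gt_eqF.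
have einv_gt0 : 0 < e^-1 by rewrite invr_gt0.
have P_gt0 : 0 < P by apply: le_lt_trans P_large; rewrite mulr_ge0 ?ltW.
rewrite ltr_pdivrMr //; nra.
Qed.

Section Witnesses.
Context {R : realType} {p l : nat} {alpha : R}.
Hypotheses (p_prime : prime p) (b_irr : irrational ((p ^ l)%:R * alpha)).

Lemma convergent_witness k : exists2 n, (0 < n)%N &
  mp_term p n alpha <= (cf_x ((p ^ l)%:R * alpha) k.+1)^-1.
Proof.
have [_ q_ge1 _] := cf_invariant b_irr k.
set b := (p ^ l)%:R * alpha in q_ge1 *.
have q_gt0 : (0 < `|cf_q b k|%N)%N by rewrite absz_gt0; lia.
have q_nat : (`|cf_q b k|%N)%:R = (cf_q b k)%:~R :> R.
  by rewrite natr_absz ger0_norm //; lia.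
exists (`|cf_q b k|%N * p ^ l)%N; first by rewrite muln_gt0 q_gt0 expn_gt0 prime_gt0.
have one_dvd : (p ^ 0 %| `|cf_q b k|%N)%N by rewrite expn0 dvd1n.
apply: le_trans (mp_term_scaled l alpha p_prime q_gt0 one_dvd) _.
by rewrite expn0 divr1 q_nat; exact: convergent_bound.
Qed.

Lemma semiconvergent_witness {k j m : nat} {d : int} :
  j%:Z <= cf_a ((p ^ l)%:R * alpha) k.+1 ->
  d = j%:Z * cf_q ((p ^ l)%:R * alpha) k + cf_qprev ((p ^ l)%:R * alpha) k ->
  d != 0 -> ((p ^ m)%:Z %| d)%Z ->
  exists2 n, (0 < n)%N &
    mp_term p n alpha <= cf_x ((p ^ l)%:R * alpha) k.+1 / (p ^ m)%:R.
Proof.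
set b := (p ^ l)%:R * alpha => j_le d_def d_neq0 d_dvd.
have [d_ge0 d_bound] := semiconvergent_bound b_irr j_le; rewrite -d_def in d_ge0 d_bound.
have d_gt0 : (0 < `|d|%N)%N by rewrite absz_gt0.
have d_nat : (`|d|%N)%:R = d%:~R :> R by rewrite natr_absz ger0_norm.
have pm_dvd : (p ^ m %| `|d|%N)%N by move: d_dvd; rewrite dvdzE absz_nat.
exists (`|d|%N * p ^ l)%N; first by rewrite muln_gt0 d_gt0 expn_gt0 prime_gt0.
apply: le_trans (mp_term_scaled l alpha p_prime d_gt0 pm_dvd) _.
by rewrite d_nat ler_wpM2r ?invr_ge0.
Qed.

End Witnesses.

(* Given e, choose m with p^m > e^-2 and use the failure of the
   infinite-loop property of b = p^(l_m) alpha mod p^m. *)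
Lemma mp_terms_small {R : realType} {p : nat} {alpha : R} {ell : nat -> nat} :
  prime p -> Bad alpha -> 0 < alpha ->
  (forall m : nat, (0 < m)%N ->
     ~ infinite_loop_mod ((p ^ ell m)%:R * alpha) (p ^ m)) ->
  forall e : R, 0 < e -> exists2 n, (0 < n)%N & mp_term p n alpha < e.
Proof.
move=> p_prime alpha_bad alpha_gt0 not_loop e e_gt0.
have [m m_gt0 pm_large] := exists_pow_gt (e^-1 * e^-1) (prime_gt1 p_prime).
set b := (p ^ ell m)%:R * alpha.
have b_irr : irrational b by apply: bad_irrational; rewrite ?expn_gt0 ?prime_gt0.
have [d [[k [j [j_le d_def]]] d_neq0 d_dvd]] :
    exists d, [/\ semiconv_denom b d, d != 0 & ((p ^ m)%:Z %| d)%Z].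
  apply: contrapT => no_d; apply: (not_loop m m_gt0); split.
    by rewrite mulr_gt0 // ltr0n expn_gt0 prime_gt0.
  by move=> d d_semi d_neq0; apply/negP => d_dvd; apply: no_d; exists d.
have x_gt0 : 0 < cf_x b k.+1.
  by apply: lt_le_trans (cf_x_ge1 (cf_frac_neq0 b_irr k)).
have [x_large | x_small] := ltrP (cf_x b k.+1)^-1 e.
  have [n n_gt0 n_le] := convergent_witness p_prime b_irr k.
  by exists n => //; apply: le_lt_trans n_le x_large.
have [n n_gt0 n_le] := semiconvergent_witness p_prime b_irr j_le d_def d_neq0 d_dvd.
by exists n => //; apply: le_lt_trans n_le (quotient_lt e_gt0 x_gt0 x_small pm_large).
Qed.

Theorem corollary3p4 (R : realType) (p : nat) (alpha : R) (ell : nat -> nat) :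
  prime p -> Bad alpha -> 0 < alpha ->
  (forall m : nat, (0 < m)%N ->
     ~ infinite_loop_mod ((p ^ ell m)%:R * alpha) (p ^ m)) ->
  m_p p alpha = 0.
Proof.
move=> p_prime alpha_bad alpha_gt0 not_loop.
apply: inf_eq0.
- by exists (mp_term p 1 alpha), 1%N.
- by move=> _ [q _ <-]; exact: mp_term_ge0.
- move=> e e_gt0.
  have [n n_gt0 n_small] := mp_terms_small p_prime alpha_bad alpha_gt0 not_loop e e_gt0.
  by exists (mp_term p n alpha) => //; exists n.
Qed.
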